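(* Assume: (A1) $f(x,y)$ and each component of $g(x,y)$ are convex in $y$ for each fixed $x$, and $f,g$ are twice continuously differentiable; (A2) $Y\subseteq\mathbb{R}^m$ is a compact convex set with $\{y:\exists x\in X \text{ such that } g(x,y)\le 0\}\subseteq\mathrm{int}(Y)$; (R1) for each $x\in X$ there exists $y$ with $g(x,y)<0$. Then for every $x\in X$: the set $\arg\max_\lambda\{\psi(\lambda,x) : \lambda\ge 0\}$ is nonempty and compact, $\max_\lambda\{h(\lambda,x):\lambda\ge 0\}=\max_\lambda\{\psi(\lambda,x):\lambda\ge0\}$, and $\arg\max_\lambda\{h(\lambda,x):\lambda\ge 0\}=\arg\max_\lambda\{\psi(\lambda,x):\lambda\ge 0\}$.
   Context: Let $f:\mathbb{R}^n\times\mathbb{R}^m\to\mathbb{R}$, $g:\mathbb{R}^n\times\mathbb{R}^m\to\mathbb{R}^p$, $G:\mathbb{R}^n\to\mathbb{R}^q$; vector inequalities are componentwise. $X=\{x\in\mathbb{R}^n: G(x)\le 0\}$. For $\lambda\in\mathbb{R}^p$, the Lagrangian dual function is $\psi(\lambda,x)=\inf_{y\in\mathbb{R}^m}\{f(x,y)+\lambda^{\mathsf T}g(x,y)\}$ (possibly $-\infty$), and the constrained Lagrangian dual function is $h(\lambda,x)=\min_{y}\{f(x,y)+\lambda^{\mathsf T}g(x,y) : y\in Y\}$, with $Y$ the set from (A2). *)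

From HB Require Import structures.
From mathcomp Require Import all_boot all_order all_algebra.
From mathcomp Require Import all_classical all_reals all_analysis.
Set Implicit Arguments. Unset Strict Implicit. Unset Printing Implicit Defensive.
Import Order.TTheory GRing.Theory Num.Theory.
Import numFieldNormedType.Exports.
Local Open Scope classical_set_scope.
Local Open Scope ring_scope.

Definition basis_vec (R : realType) (k : nat) (i : 'I_k) : 'rV[R]_k :=
  delta_mx 0 i.

Definition C2 (R : realType) (k : nat) (F : 'rV[R]_k -> R) : Prop :=
  continuous F /\
  forall i : 'I_k,
    (forall z, derivable F z (basis_vec R i)) /\
    continuous (fun z => 'D_(basis_vec R i) F z) /\
    forall j : 'I_k,
      (forall z, derivable (fun w => 'D_(basis_vec R i) F w) z (basis_vec R j)) /\
      continuous (fun z => 'D_(basis_vec R j) (fun w => 'D_(basis_vec R i) F w) z).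

Definition uncurry_rv (R : realType) (n m : nat) (F : 'rV[R]_n -> 'rV[R]_m -> R)
  : 'rV[R]_(n + m) -> R := fun z => F (lsubmx z) (rsubmx z).

Definition convex_fun (R : realType) (m : nat) (F : 'rV[R]_m -> R) : Prop :=
  forall (a b : 'rV[R]_m) (t : R), 0 <= t -> t <= 1 ->
    F (t *: a + (1 - t) *: b) <= t * F a + (1 - t) * F b.

Definition convex_set_rv (R : realType) (m : nat) (Y : set 'rV[R]_m) : Prop :=
  forall (a b : 'rV[R]_m) (t : R), Y a -> Y b -> 0 <= t -> t <= 1 ->
    Y (t *: a + (1 - t) *: b).

Definition feasX (R : realType) (n q : nat) (G : 'rV[R]_n -> 'rV[R]_q)
  : set 'rV[R]_n := [set x | forall i : 'I_q, G x 0 i <= 0].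

Definition lagr (R : realType) (n m p : nat) (f : 'rV[R]_n -> 'rV[R]_m -> R)
  (g : 'rV[R]_n -> 'rV[R]_m -> 'rV[R]_p) (lam : 'rV[R]_p) (x : 'rV[R]_n)
  (y : 'rV[R]_m) : R :=
  f x y + \sum_(i < p) lam 0 i * g x y 0 i.

Definition psi (R : realType) (n m p : nat) (f : 'rV[R]_n -> 'rV[R]_m -> R)
  (g : 'rV[R]_n -> 'rV[R]_m -> 'rV[R]_p) (lam : 'rV[R]_p) (x : 'rV[R]_n)
  : \bar R :=
  ereal_inf [set (lagr f g lam x y)%:E | y in [set: 'rV[R]_m]].

(* constrained dual function h(lambda,x) = min_{y in Y} (the min is attained
   under the hypotheses; we define it as the infimum over Y) *)
Definition hdual (R : realType) (n m p : nat) (f : 'rV[R]_n -> 'rV[R]_m -> R)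
  (g : 'rV[R]_n -> 'rV[R]_m -> 'rV[R]_p) (Y : set 'rV[R]_m) (lam : 'rV[R]_p)
  (x : 'rV[R]_n) : \bar R :=
  ereal_inf [set (lagr f g lam x y)%:E | y in Y].

Definition nonneg_rv (R : realType) (p : nat) : set 'rV[R]_p :=
  [set lam | forall i : 'I_p, 0 <= lam 0 i].

Definition argmax_nonneg (R : realType) (p : nat) (phi : 'rV[R]_p -> \bar R)
  : set 'rV[R]_p :=
  [set lam | @nonneg_rv R p lam /\
             forall mu, @nonneg_rv R p mu -> (phi mu <= phi lam)%E].

From HB Require Import structures.
From mathcomp Require Import all_boot all_order all_algebra.
From mathcomp Require Import all_classical all_reals all_analysis.
From mathcomp Require Import ring lra.

Import Order.TTheory GRing.Theory Num.Theory.
Import numFieldNormedType.Exports.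
Set Implicit Arguments. Unset Strict Implicit. Unset Printing Implicit Defensive.
Local Open Scope classical_set_scope.
Local Open Scope ring_scope.

(* Fix a feasible x and let v be the minimum of f(x,.) over the compact set
   S = {y | g(x,y) <= 0}, attained at ys.  The convex theorem of the
   alternative (Fan-Glicksberg-Hoffman) and Slater's condition give a
   multiplier l0 >= 0 with L(l0,.) >= v, where L is the Lagrangian, while
   L(l,ys) <= v for every l >= 0.  Hence both dual functions are bounded by v
   on l >= 0, both reach v, and both argmax sets equal
   Lam = {l >= 0 | L(l,.) >= v}.  For h this needs ys in the interior of Y:
   a convex function that is >= v on a neighbourhood of a point where it is
   <= v is >= v everywhere.  Lam is closed, and bounded because L(l,y0) >= v
   at a Slater point y0 bounds every l_i. *)

Section ConvexAlternative.
Variables (R : realType) (V : lmodType R).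

Definition is_convex (D : set V) := forall a b (t : R), D a -> D b ->
  0 <= t -> t <= 1 -> D (t *: a + (1 - t) *: b).

Definition convex_on (D : set V) (F : V -> R) := forall a b (t : R), D a -> D b ->
  0 <= t -> t <= 1 -> F (t *: a + (1 - t) *: b) <= t * F a + (1 - t) * F b.

Lemma convex_on_sub (D E : set V) (F : V -> R) :
  E `<=` D -> convex_on D F -> convex_on E F.
Proof. by move=> ED cF a b t Ea Eb; apply: cF; apply: ED. Qed.

Lemma convex_on_conic (D : set V) k (c0 : R) (c : 'I_k -> R) (F0 : V -> R)
    (F : 'I_k -> V -> R) :
  0 <= c0 -> (forall i, 0 <= c i) -> convex_on D F0 -> (forall i, convex_on D (F i)) ->
  convex_on D (fun y => c0 * F0 y + \sum_i c i * F i y).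
Proof.
move=> c0_ge0 c_ge0 cF0 cF a b t Da Db t0 t1.
have -> : t * (c0 * F0 a + \sum_i c i * F i a) + (1 - t) * (c0 * F0 b + \sum_i c i * F i b)
    = c0 * (t * F0 a + (1 - t) * F0 b) + \sum_i c i * (t * F i a + (1 - t) * F i b).
  rewrite !mulrDr !mulr_sumr addrACA -big_split /=; congr (_ + _); first ring.
  by apply: eq_bigr => i _; ring.
apply: lerD; first by rewrite ler_wpM2l // cF0.
by apply: ler_sum => i _; rewrite ler_wpM2l // cF.
Qed.

Lemma convex_on_subr (D : set V) (F : V -> R) (c : R) :
  convex_on D F -> convex_on D (fun y => F y - c).
Proof. by move=> cF a b t Da Db t0 t1; have := cF a b t Da Db t0 t1; lra. Qed.

Lemma is_convex_sublevel_lt (D : set V) (F : V -> R) (c : R) :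
  is_convex D -> convex_on D F -> is_convex (D `&` [set y | F y < c]).
Proof.
move=> cD cF a b t [Da Fa] [Db Fb] t0 t1; split; first exact: cD.
apply: le_lt_trans (cF _ _ _ Da Db t0 t1) _.
have [->|t_gt0] := eqVneq t 0; first by rewrite mul0r add0r subr0 mul1r.
have : 0 < t by rewrite lt_def t_gt0 t0.
rewrite /= in Fa Fb; nra.
Qed.

Section TwoFunctions.
Variables (D : set V) (F1 F2 : V -> R).
Hypotheses (convD : is_convex D) (convF1 : convex_on D F1) (convF2 : convex_on D F2).
Hypothesis not_both_neg : forall y, D y -> ~ (F1 y < 0 /\ F2 y < 0).

Lemma convex_pair_cross y z : D y -> D z -> F2 y < F1 y -> F1 z < F2 z ->
  F1 z * F2 y <= F1 y * F2 z.
Proof.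
move=> Dy Dz yF zF; rewrite leNgt; apply/negP => cross.
pose al := F2 z - F1 z; pose be := F1 y - F2 y.
have ab_gt0 : 0 < al + be by rewrite /al /be; lra.
pose t := al / (al + be).
have t0 : 0 <= t by apply: divr_ge0; rewrite /al /be; lra.
have t1 : t <= 1 by rewrite ler_pdivrMr // mul1r /al /be; lra.
have mix H : (al + be) * (t * H y + (1 - t) * H z) = al * H y + be * H z.
  by rewrite /t; field; rewrite gt_eqF.
have neg_mix H : convex_on D H -> al * H y + be * H z < 0 ->
    H (t *: y + (1 - t) *: z) < 0.
  move=> cH Hneg; apply: le_lt_trans (cH _ _ _ Dy Dz t0 t1) _.
  by rewrite -(pmulr_rlt0 _ ab_gt0) mix.
apply: (not_both_neg (convD Dy Dz t0 t1)).
by split; apply: neg_mix => //; rewrite /al /be; nra.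
Qed.

Lemma convex_alternative2 : exists t : R,
  [/\ 0 <= t, t <= 1 & forall y, D y -> 0 <= t * F1 y + (1 - t) * F2 y].
Proof.
(* The conclusion at y reads t <= r y if F1 y < F2 y and r y <= t if F2 y < F1 y;
   by convex_pair_cross each such lower bound is below each upper bound. *)
pose r y := F2 y / (F2 y - F1 y).
have rK y : (F1 y == F2 y) = false -> r y * (F2 y - F1 y) = F2 y.
  by move=> neq; rewrite mulfVK // subr_eq0 eq_sym neq.
pose A := [set 0] `|` [set r y | y in [set y | D y /\ F2 y < F1 y]].
have A_le1 s : A s -> s <= 1.
  case=> [->|[y [Dy yF] <-]]; first exact: ler01.
  have := rK y (gt_eqF yF); have := not_both_neg Dy.
  move: (r y) => ry; case: (ltP (F1 y) 0) => F1y; nra.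
have A_le_r z : D z -> F1 z < F2 z -> forall s, A s -> s <= r z.
  move=> Dz zF s [->|[y [Dy yF] <-]].
    rewrite divr_ge0 //; last by rewrite subr_ge0 ltW.
    by rewrite leNgt; apply/negP => F2z; apply: (not_both_neg Dz); lra.
  have -> : r y = - F2 y / (F1 y - F2 y) by rewrite /r -[F2 y - F1 y]opprB invrN mulrN mulNr.
  rewrite ler_pdivrMr ?subr_gt0 // mulrAC ler_pdivlMr ?subr_gt0 //.
  have := convex_pair_cross Dy Dz yF zF; nra.
have supA : has_sup A by split; [exists 0; left | exists 1 => s /A_le1].
exists (sup A); split.
- by apply: sup_upper_bound => //; left.
- by apply: ge_sup; [exists 0; left | move=> s /A_le1].
move=> y Dy; have [yF|yF|yF] := ltgtP (F1 y) (F2 y).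
- have : sup A <= r y by apply: ge_sup; [exists 0; left | exact: A_le_r].
  have := rK y (lt_eqF yF); move: (r y) (sup A) => ry t; nra.
- have : r y <= sup A by apply: sup_upper_bound => //; right; exists y.
  have := rK y (gt_eqF yF); move: (r y) (sup A) => ry t; nra.
- have F2y : 0 <= F2 y.
    by rewrite leNgt; apply/negP => F2y; apply: (not_both_neg Dy); rewrite yF.
  by rewrite yF -mulrDl subrKC mul1r.
Qed.

End TwoFunctions.

Lemma convex_alternative k (D : set V) (F0 : V -> R) (F : 'I_k -> V -> R) :
  is_convex D -> convex_on D F0 -> (forall i, convex_on D (F i)) ->
  (forall y, D y -> ~ (F0 y < 0 /\ forall i, F i y < 0)) ->
  exists (mu0 : R) (mu : 'I_k -> R), [/\ 0 <= mu0, forall i, 0 <= mu i,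
    mu0 + \sum_i mu i = 1 & forall y, D y -> 0 <= mu0 * F0 y + \sum_i mu i * F i y].
Proof.
elim: k D F => [|k IH] D F convD convF0 convF infeasible.
  exists 1, (fun=> 0); rewrite big_ord0 addr0; split=> // y Dy.
  rewrite big_ord0 addr0 mul1r leNgt; apply/negP => F0y.
  by apply: (infeasible y Dy); split => // -[].
(* Apply the induction hypothesis where the last constraint is negative, then
   merge its combination H with the last constraint by convex_alternative2. *)
pose Fw i := F (widen_ord (leqnSn k) i).
have liftW j : lift ord_max j = widen_ord (leqnSn k) j by apply: val_inj; exact: lift_max.
pose Dlast := D `&` [set y | F ord_max y < 0].
have Dlast_sub : Dlast `<=` D by move=> y [].
have [mu0' [mu' [mu0'_ge0 mu'_ge0 mu'_sum mu'_ineq]]] :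
    exists (mu0 : R) (mu : 'I_k -> R), [/\ 0 <= mu0, forall i, 0 <= mu i,
      mu0 + \sum_i mu i = 1 & forall y, Dlast y -> 0 <= mu0 * F0 y + \sum_i mu i * Fw i y].
  apply: IH; first exact: is_convex_sublevel_lt.
  - exact: convex_on_sub convF0.
  - by move=> i; exact: convex_on_sub (convF _).
  move=> y [Dy Flast] [F0y Fwy]; apply: (infeasible y Dy); split => // i.
  by case: (unliftP ord_max i) => [j ->|->] //; rewrite liftW; apply: Fwy.
pose H y := mu0' * F0 y + \sum_i mu' i * Fw i y.
have [t [t0 t1 combine]] : exists t : R,
    [/\ 0 <= t, t <= 1 & forall y, D y -> 0 <= t * H y + (1 - t) * F ord_max y].
  apply: convex_alternative2 => //.
  - exact: convex_on_conic mu0'_ge0 mu'_ge0 convF0 (fun i => convF _).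
  by move=> y Dy [Hy Flast]; have := mu'_ineq y (conj Dy Flast); rewrite leNgt Hy.
pose mu i := if unlift ord_max i is Some j then t * mu' j else 1 - t.
have muW j : mu (widen_ord (leqnSn k) j) = t * mu' j.
  by rewrite /mu -liftW liftK.
have muM : mu ord_max = 1 - t by rewrite /mu unlift_none.
exists (t * mu0'), mu; split.
- exact: mulr_ge0.
- move=> i; rewrite /mu; case: (unlift ord_max i) => [j|]; first exact: mulr_ge0.
  by rewrite subr_ge0.
- rewrite big_ord_recr /= muM; under eq_bigr do rewrite muW.
  by rewrite -mulr_sumr addrA -mulrDr mu'_sum mulr1 addrC subrK.
move=> y Dy; rewrite big_ord_recr /= muM; under eq_bigr do rewrite muW.
have -> : t * mu0' * F0 y + (\sum_(j < k) t * mu' j * Fw j y + (1 - t) * F ord_max y)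
    = t * H y + (1 - t) * F ord_max y.
  rewrite /H mulrDr mulr_sumr !addrA; congr (_ + _ + _); first ring.
  by apply: eq_bigr => i _; rewrite mulrA.
exact: combine.
Qed.

End ConvexAlternative.

Lemma convex_ge_of_nbhs (R : realType) (V : normedModType R) (F : V -> R)
    (A : set V) (z : V) (c : R) :
  convex_on setT F -> nbhs z A -> F z <= c -> (forall y, A y -> c <= F y) ->
  forall y, c <= F y.
Proof.
move=> cF /nbhs_ballP[e /= e_gt0 zeA] Fz geA y.
pose s := e / (e + `|z - y|).
have s_gt0 : 0 < s by rewrite divr_gt0 // ltr_wpDr.
have s_le1 : s <= 1 by rewrite ler_pdivrMr ?ltr_wpDr // mul1r lerDl.
have Aw : A (s *: y + (1 - s) *: z).
  apply: zeA; rewrite -ball_normE /ball_ /=.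
  have -> : z - (s *: y + (1 - s) *: z) = s *: (z - y).
    by rewrite scalerBl scale1r scalerBr opprD opprB addrA addrC addrA subrK.
  rewrite normrZ gtr0_norm // /s mulrAC ltr_pdivrMr ?ltr_wpDr //.
  by rewrite ltr_pM2l // ltrDr.
have convex_step := le_trans (geA _ Aw) (cF _ _ _ I I (ltW s_gt0) s_le1).
have weighted : (1 - s) * F z <= (1 - s) * c by rewrite ler_wpM2l // subr_ge0.
by rewrite -(ler_pM2l s_gt0); lra.
Qed.

Lemma weighted_sumr_lt0 (R : numDomainType) k (mu a : 'I_k -> R) :
  (forall i, 0 <= mu i) -> \sum_i mu i != 0 -> (forall i, a i < 0) ->
  \sum_i mu i * a i < 0.
Proof.
move=> mu_ge0 /eqP /psumr_neq0P -/(_ (fun i _ => mu_ge0 i)) [j /= mu_j] a_lt0.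
rewrite (bigD1 j) //=; apply: ltr_nwDl; first by rewrite pmulr_rlt0.
by apply: sumr_le0 => i _; rewrite mulr_ge0_le0 // ltW.
Qed.

Lemma continuous_row_mxr (R : realType) n m (x : 'rV[R]_n) :
  continuous (fun y : 'rV[R]_m => row_mx x y).
Proof.
move=> y A /nbhs_ballP[e e_gt0 eA]; apply/nbhs_ballP; exists e => // z [_ yz].
apply: eA; split => // i j; rewrite -(splitK j).
by case: (fintype.split j) => k /=; rewrite ?row_mxEl ?row_mxEr //; exact: ballxx.
Qed.

Lemma C2_continuous_slice (R : realType) n m (F : 'rV[R]_n -> 'rV[R]_m -> R) x :
  C2 (uncurry_rv F) -> continuous (F x).
Proof.
move=> [contF _]; have -> : F x = uncurry_rv F \o row_mx x.
  by apply: funext => y; rewrite /= /uncurry_rv row_mxKl row_mxKr.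
by move=> y; apply: continuous_comp; [exact: continuous_row_mxr | exact: contF].
Qed.

Lemma continuous_lagr_mult (R : realType) n m p (f : 'rV[R]_n -> 'rV[R]_m -> R)
    (g : 'rV[R]_n -> 'rV[R]_m -> 'rV[R]_p) x y :
  continuous (fun lam : 'rV[R]_p => lagr f g lam x y).
Proof.
move=> lam; apply: continuousD; first exact: cst_continuous.
apply: (@continuous_big _ _ +%R 0 xpredT _ _ (index_enum _)
  (fun i (l : 'rV[R]_p) => l 0 i * g x y 0 i)); first exact: add_continuous.
by move=> i _ l; apply: continuousM; [exact: coord_continuous | exact: cst_continuous].
Qed.

Lemma closed_nonneg_rv (R : realType) p : closed (@nonneg_rv R p).
Proof.
have -> : @nonneg_rv R p =
    \bigcap_(i in [set: 'I_p]) ((fun lam : 'rV[R]_p => lam 0 i) @^-1` [set r | 0 <= r]).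
  by apply/seteqP; split => lam lam_ge0 i; [move=> _|]; apply: lam_ge0.
apply: closed_bigI => i _; apply: preimage_closed; last exact: closed_ge.
by move=> lam _; exact: coord_continuous.
Qed.

Lemma ereal_inf_image_geP (R : realType) (T : Type) (A : set T) (F : T -> R) (r : R) :
  (r%:E <= ereal_inf [set (F y)%:E | y in A])%E <-> forall y, A y -> r <= F y.
Proof.
split => [rle y Ay | rle].
  by rewrite -lee_fin; apply: le_trans rle _; apply: ereal_inf_lbound; exists y.
by apply/ereal_infP => _ [y Ay <-]; rewrite lee_fin rle.
Qed.

Lemma ereal_sup_image_attained (R : realType) (T : Type) (A : set T)
    (phi : T -> \bar R) (r : \bar R) a :
  (forall b, A b -> phi b <= r)%E -> A a -> (r <= phi a)%E -> ereal_sup (phi @` A) = r.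
Proof.
move=> ler Aa rle; apply/le_anti/andP; split.
  by apply/ereal_supP => _ [b Ab <-]; exact: ler.
by apply: le_trans rle _; apply: ereal_sup_ubound; exists a.
Qed.

Lemma argmax_nonneg_ge (R : realType) p (phi : 'rV[R]_p -> \bar R) (r : \bar R) lam0 :
  (forall lam, nonneg_rv lam -> phi lam <= r)%E -> nonneg_rv lam0 -> (r <= phi lam0)%E ->
  argmax_nonneg phi = [set lam | nonneg_rv lam /\ (r <= phi lam)%E].
Proof.
move=> ler lam0_ge0 rle; apply/seteqP; split => lam [lam_ge0 max]; split => //.
  exact: le_trans rle (max _ lam0_ge0).
by move=> mu mu_ge0; apply: le_trans (ler _ mu_ge0) max.
Qed.

Lemma convex_fun_on_setT (R : realType) m (F : 'rV[R]_m -> R) :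
  convex_fun F -> convex_on setT F.
Proof. by move=> cF a b t _ _; exact: cF. Qed.

Lemma psi_le_hdual (R : realType) n m p (f : 'rV[R]_n -> 'rV[R]_m -> R)
    (g : 'rV[R]_n -> 'rV[R]_m -> 'rV[R]_p) Y lam x :
  (psi f g lam x <= hdual f g Y lam x)%E.
Proof. by apply/ereal_infP => _ [y _ <-]; apply: ereal_inf_lbound; exists y. Qed.

Section DualityAtFeasiblePoint.
Variables (R : realType) (n m p : nat) (f : 'rV[R]_n -> 'rV[R]_m -> R)
  (g : 'rV[R]_n -> 'rV[R]_m -> 'rV[R]_p) (Y : set 'rV[R]_m) (x : 'rV[R]_n).

Let S := [set y | forall i : 'I_p, g x y 0 i <= 0].

Hypotheses (convf : convex_fun (f x)) (convg : forall i, convex_fun (fun y => g x y 0 i)).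
Hypotheses (contf : continuous (f x)) (contg : forall i, continuous (fun y => g x y 0 i)).
Hypotheses (compactY : compact Y) (S_interior : S `<=` interior Y).
Variable y0 : 'rV[R]_m.
Hypothesis slater : forall i, g x y0 0 i < 0.

Lemma compact_feasible : compact S.
Proof.
apply: subclosed_compact compactY (fun y Sy => interior_subset (S_interior Sy)).
have -> : S = \bigcap_(i in [set: 'I_p]) ((fun y => g x y 0 i) @^-1` [set r | r <= 0]).
  by apply/seteqP; split => y Sy i; [move=> _|]; apply: Sy.
apply: closed_bigI => i _; apply: preimage_closed; last exact: closed_le.
by move=> y _; exact: contg.
Qed.

Lemma exists_primal_min : exists2 ys, S ys & forall y, S y -> f x ys <= f x y.
Proof.
have S0 : S !=set0 by exists y0 => i; exact: ltW.
have [ys] := compact_EVT_min S0 compact_feasible (continuous_subspaceT contf).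
by rewrite inE => Sys ys_min; exists ys => // y Sy; apply: ys_min; rewrite inE.
Qed.

Variable ys : 'rV[R]_m.
Hypotheses (feasible_ys : S ys) (min_ys : forall y, S y -> f x ys <= f x y).

Let v := f x ys.

Let Lam := [set lam | nonneg_rv lam /\ forall y, v <= lagr f g lam x y].

Lemma convex_lagr lam : nonneg_rv lam -> convex_on setT (lagr f g lam x).
Proof.
move=> lam_ge0 a b t _ _ t0 t1.
have conic := convex_on_conic ler01 lam_ge0 (convex_fun_on_setT convf)
  (fun i => convex_fun_on_setT (convg i)).
by have := conic a b t I I t0 t1; rewrite /lagr !mul1r.
Qed.

Lemma lagr_le_primal lam : nonneg_rv lam -> lagr f g lam x ys <= v.
Proof.
move=> lam_ge0; rewrite /lagr gerDl; apply: sumr_le0 => i _.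
exact: mulr_ge0_le0 (lam_ge0 i) (feasible_ys i).
Qed.

Lemma exists_lagr_ge_primal : exists2 lam, nonneg_rv lam & forall y, v <= lagr f g lam x y.
Proof.
have no_better y : ~ (f x y - v < 0 /\ forall i, g x y 0 i < 0).
  by move=> [fy gy]; have := min_ys (fun i => ltW (gy i)); rewrite -/v; lra.
have [mu0 [mu [mu0_ge0 mu_ge0 mu_sum mu_ineq]]] :=
  @convex_alternative R _ p setT (fun y => f x y - v) (fun i y => g x y 0 i)
    (fun _ _ _ _ _ _ _ => I) (convex_on_subr v (convex_fun_on_setT convf))
    (fun i => convex_fun_on_setT (convg i)) (fun y _ => no_better y).
have mu0_gt0 : 0 < mu0.
  rewrite lt_def mu0_ge0 andbT; apply/eqP => mu0_eq0.
  have mu_ne0 : \sum_i mu i != 0.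
    by rewrite -(add0r (\sum_i mu i)) -[X in X + _]mu0_eq0 mu_sum oner_neq0.
  have := mu_ineq y0 I; rewrite mu0_eq0 mul0r add0r.
  by rewrite leNgt (weighted_sumr_lt0 mu_ge0 mu_ne0 slater).
exists (\row_i (mu i / mu0)); first by move=> i; rewrite mxE divr_ge0.
move=> y; have := mu_ineq y I.
have -> : \sum_i mu i * g x y 0 i = mu0 * \sum_i (\row_i (mu i / mu0)) 0 i * g x y 0 i.
  rewrite mulr_sumr; apply: eq_bigr => i _.
  by rewrite mxE mulrA mulrCA mulfV ?mulr1 // gt_eqF.
by rewrite -mulrDr pmulr_rge0 // /lagr; lra.
Qed.

Lemma lagr_ge_primal_of_Y lam : nonneg_rv lam ->
  (forall y, Y y -> v <= lagr f g lam x y) -> forall y, v <= lagr f g lam x y.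
Proof.
move=> lam_ge0; apply: convex_ge_of_nbhs (convex_lagr lam_ge0) (S_interior feasible_ys) _.
exact: lagr_le_primal.
Qed.

Lemma psi_le_primal lam : nonneg_rv lam -> (psi f g lam x <= v%:E)%E.
Proof.
move=> lam_ge0; apply: (@le_trans _ _ (lagr f g lam x ys)%:E).
  by apply: ereal_inf_lbound; exists ys.
by rewrite lee_fin lagr_le_primal.
Qed.

Lemma hdual_le_primal lam : nonneg_rv lam -> (hdual f g Y lam x <= v%:E)%E.
Proof.
move=> lam_ge0; apply: (@le_trans _ _ (lagr f g lam x ys)%:E).
  by apply: ereal_inf_lbound; exists ys => //; exact: interior_subset (S_interior feasible_ys).
by rewrite lee_fin lagr_le_primal.
Qed.

Lemma argmax_psiE : argmax_nonneg (fun lam => psi f g lam x) = Lam.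
Proof.
have [lam0 lam0_ge0 lam0_ge] := exists_lagr_ge_primal.
rewrite (argmax_nonneg_ge psi_le_primal lam0_ge0); last exact/ereal_inf_image_geP.
apply/seteqP; split => lam [lam_ge0 lam_ge]; split => //.
  by move/ereal_inf_image_geP: lam_ge => lam_ge y; exact: lam_ge.
exact/ereal_inf_image_geP.
Qed.

Lemma argmax_hdualE : argmax_nonneg (fun lam => hdual f g Y lam x) = Lam.
Proof.
have [lam0 lam0_ge0 lam0_ge] := exists_lagr_ge_primal.
rewrite (argmax_nonneg_ge hdual_le_primal lam0_ge0); last first.
  by apply: le_trans (psi_le_hdual _ _ _ _ _); exact/ereal_inf_image_geP.
apply/seteqP; split => lam [lam_ge0 lam_ge]; split => //.
  by apply: lagr_ge_primal_of_Y => //; exact/ereal_inf_image_geP.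
by apply/ereal_inf_image_geP => y _; exact: lam_ge.
Qed.

Lemma ereal_sup_psiE : ereal_sup [set psi f g lam x | lam in @nonneg_rv R p] = v%:E.
Proof.
have [lam0 lam0_ge0 lam0_ge] := exists_lagr_ge_primal.
by apply: ereal_sup_image_attained psi_le_primal lam0_ge0 _; exact/ereal_inf_image_geP.
Qed.

Lemma ereal_sup_hdualE : ereal_sup [set hdual f g Y lam x | lam in @nonneg_rv R p] = v%:E.
Proof.
have [lam0 lam0_ge0 lam0_ge] := exists_lagr_ge_primal.
apply: ereal_sup_image_attained hdual_le_primal lam0_ge0 _.
by apply: le_trans (psi_le_hdual _ _ _ _ _); exact/ereal_inf_image_geP.
Qed.

Lemma Lam_entry_le lam j : Lam lam -> lam 0 j * - g x y0 0 j <= f x y0 - v.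
Proof.
move=> [lam_ge0 lam_ge]; have := lam_ge y0; rewrite /lagr (bigD1 j) //=.
have : \sum_(i | i != j) lam 0 i * g x y0 0 i <= 0.
  by apply: sumr_le0 => i _; rewrite mulr_ge0_le0 // ltW.
lra.
Qed.

Lemma bounded_Lam : bounded_set Lam.
Proof.
have g_gt0 j : 0 < - g x y0 0 j by rewrite oppr_gt0.
have gap_ge0 : 0 <= f x y0 - v by rewrite subr_ge0 min_ys // => i; exact: ltW.
pose B := \sum_j (f x y0 - v) / - g x y0 0 j.
have B_ge0 : 0 <= B by apply: sumr_ge0 => j _; rewrite divr_ge0 // ltW.
have entry_le lam j : Lam lam -> lam 0 j <= B.
  move=> Lam_lam; apply: (@le_trans _ _ ((f x y0 - v) / - g x y0 0 j)).
    by rewrite ler_pdivlMr // Lam_entry_le.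
  rewrite /B (bigD1 j) //= lerDl; apply: sumr_ge0 => i _.
  by rewrite divr_ge0 // ltW.
rewrite /bounded_near; apply: filterS (nbhs_pinfty_ge (num_real B)) => r Br lam Lam_lam.
apply: le_trans Br; rewrite /Num.norm /= mx_normrE; apply: bigmax_le => // -[i j] _ /=.
by rewrite (ord1 i) ger0_norm; [exact: entry_le | exact: Lam_lam.1].
Qed.

Lemma closed_Lam : closed Lam.
Proof.
have -> : Lam = @nonneg_rv R p `&` \bigcap_(y in [set: 'rV[R]_m])
    ((fun lam => lagr f g lam x y) @^-1` [set r | v <= r]).
  by apply/seteqP; split => lam [lam_ge0 lam_ge]; split => // y; [move=> _|]; apply: lam_ge.
apply: closedI; first exact: closed_nonneg_rv.
apply: closed_bigI => y _; apply: preimage_closed; last exact: closed_ge.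
by move=> lam _; exact: continuous_lagr_mult.
Qed.

Lemma compact_Lam : compact Lam.
Proof. exact: bounded_closed_compact bounded_Lam closed_Lam. Qed.

Lemma Lam_nonempty : Lam !=set0.
Proof. by have [lam0 lam0_ge0 lam0_ge] := exists_lagr_ge_primal; exists lam0. Qed.

End DualityAtFeasiblePoint.

Unset Implicit Arguments. Set Strict Implicit.

Theorem theorem1 (R : realType) (n m p q : nat)
  (f : 'rV[R]_n -> 'rV[R]_m -> R)
  (g : 'rV[R]_n -> 'rV[R]_m -> 'rV[R]_p)
  (G : 'rV[R]_n -> 'rV[R]_q)
  (Y : set 'rV[R]_m)
  (* (A1) *)
  (Hfconv : forall x, convex_fun (f x))
  (Hgconv : forall x (i : 'I_p), convex_fun (fun y => g x y 0 i))
  (HfC2 : C2 (uncurry_rv f))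
  (HgC2 : forall i : 'I_p, C2 (uncurry_rv (fun x y => g x y 0 i)))
  (* (A2) *)
  (HYcomp : compact Y) (HYconv : convex_set_rv Y)
  (HYint : [set y | exists x, feasX G x /\ forall i : 'I_p, g x y 0 i <= 0]
             `<=` interior Y)
  (* (R1) *)
  (HSlater : forall x, feasX G x -> exists y, forall i : 'I_p, g x y 0 i < 0) :
  forall x, feasX G x ->
    argmax_nonneg (fun lam => psi f g lam x) !=set0 /\
    compact (argmax_nonneg (fun lam => psi f g lam x)) /\
    ereal_sup [set hdual f g Y lam x | lam in @nonneg_rv R p] =
      ereal_sup [set psi f g lam x | lam in @nonneg_rv R p] /\
    argmax_nonneg (fun lam => hdual f g Y lam x) =
      argmax_nonneg (fun lam => psi f g lam x).
Proof.
move=> x feasible_x.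
have contf : continuous (f x) := C2_continuous_slice HfC2.
have contg i : continuous (fun y => g x y 0 i) := C2_continuous_slice (HgC2 i).
have S_interior : [set y | forall i, g x y 0 i <= 0] `<=` interior Y.
  by move=> y Sy; apply: HYint; exists x.
have [y0 slater] := HSlater x feasible_x.
have [ys feasible_ys min_ys] := exists_primal_min contf contg HYcomp S_interior slater.
have convf := Hfconv x; have convg := Hgconv x.
rewrite (argmax_hdualE convf convg S_interior slater feasible_ys min_ys).
rewrite (argmax_psiE convf convg slater feasible_ys min_ys).
rewrite (ereal_sup_hdualE convf convg S_interior slater feasible_ys min_ys).
rewrite (ereal_sup_psiE convf convg slater feasible_ys min_ys).
split; first exact: (Lam_nonempty convf convg slater min_ys).
by split; first exact: (compact_Lam slater min_ys).
Qed.
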